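(* Let $t$ be an indeterminate. For all integers $n\ge1$ and $l\ge1$, $$\sum_{\substack{\lambda:\ |\lambda|=n,\\ \ell(\lambda)=l}} t^{2n(\lambda)}\frac{(t;t)_l}{(t;t)_{m_1(\lambda)}(t;t)_{m_2(\lambda)}\cdots(t;t)_{m_n(\lambda)}}=t^{l(l-1)}\begin{bmatrix}n-1\\ l-1\end{bmatrix}_t .$$
   Context: For a partition $\lambda$: $|\lambda|=\sum_i\lambda_i$, $\ell(\lambda)$ is the number of nonzero parts, $n(\lambda)=\sum_{i\ge1}(i-1)\lambda_i$, and $m_j(\lambda)=\#\{i:\lambda_i=j\}$. $(x;t)_m=\prod_{i=1}^m(1-xt^{i-1})$, $(x;t)_0=1$, and $\begin{bmatrix} a\\ b\end{bmatrix}_t=\frac{(t;t)_a}{(t;t)_b(t;t)_{a-b}}$ for $0\le b\le a$, $0$ otherwise. *)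

From HB Require Import structures.
From mathcomp Require Import all_boot all_order all_algebra fraction.
Set Implicit Arguments. Unset Strict Implicit. Unset Printing Implicit Defensive.
Import Order.TTheory GRing.Theory Num.Theory.
Local Open Scope ring_scope.

Definition is_partition (n : nat) (s : seq nat) : bool :=
  [&& sorted geq s, all (fun x => 0 < x)%N s & sumn s == n].

(* n(lambda) = sum_{i>=1} (i-1) lambda_i  (0-based index i below) *)
Definition nfun (s : seq nat) : nat := (\sum_(i < size s) i * nth 0 s i)%N.

Definition mult (j : nat) (s : seq nat) : nat := count_mem j s.

Definition qpoch (R : comNzRingType) (x t : R) (m : nat) : R :=
  \prod_(i < m) (1 - x * t ^+ i).

Definition qbinom (F : fieldType) (t : F) (a b : nat) : F :=
  if (b <= a)%N then qpoch t t a / (qpoch t t b * qpoch t t (a - b)) else 0.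

(* The indeterminate t, as an element of the field of rational functions Q(t)
   (built over Z[t]). *)
Definition Frt := {fraction {poly int}}.
Definition tq : Frt := @FracField.tofrac _ ('X : {poly int}).

(* Removing the first column of a partition with l parts leaves a partition mu
   of n - l with k <= l parts, and the summand for lambda equals
   t^(l(l-1)) [l, k]_t times the summand for mu (the parts equal to 1 supply
   the factor (t;t)_(l-k)). Hence the sums F(n, l) satisfy
   F(n, l) = t^(l(l-1)) sum_k [l, k]_t F(n - l, k), and the closed form follows
   by strong induction on n from the q-Vandermonde identity. *)
From mathcomp Require Import all_boot all_order all_algebra fraction.
From mathcomp Require Import ring zify.
Set Implicit Arguments. Unset Strict Implicit. Unset Printing Implicit Defensive.
Import GRing.Theory.
Local Open Scope ring_scope.

Lemma qpoch0 (R : comNzRingType) (x t : R) : qpoch x t 0 = 1.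
Proof. by rewrite /qpoch big_ord0. Qed.

Lemma qpochS (R : comNzRingType) (x t : R) m :
  qpoch x t m.+1 = qpoch x t m * (1 - x * t ^+ m).
Proof. by rewrite /qpoch big_ord_recr. Qed.

Section QBinomial.

Variables (F : fieldType) (t : F).

Lemma qbinom_addE b c :
  qbinom t (b + c) b = qpoch t t (b + c) / (qpoch t t b * qpoch t t c).
Proof. by rewrite /qbinom leq_addr addKn. Qed.

Lemma qbinom_small a b : (a < b)%N -> qbinom t a b = 0.
Proof. by rewrite /qbinom ltnNge => /negbTE ->. Qed.

Lemma qbinom_sub a b : (b <= a)%N -> qbinom t a (a - b) = qbinom t a b.
Proof.
by move=> le_ba; rewrite /qbinom le_ba leq_subr subKn // [_ * qpoch t t b]mulrC.
Qed.

(* Both q-Pascal rules reduce, for b < a, to an identity of rational functions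
   in t ^+ b.+1 and t ^+ c.+1, where a = b + c.+1. *)
Lemma qbinomSE b c :
  [/\ qbinom t (b + c.+1).+1 b.+1 = qpoch t t (b + c) * (1 - t ^+ (b + c).+1)
        * (1 - t ^+ b.+1 * t ^+ c.+1)
        / (qpoch t t b * (1 - t ^+ b.+1) * (qpoch t t c * (1 - t ^+ c.+1))),
      qbinom t (b + c.+1) b = qpoch t t (b + c) * (1 - t ^+ (b + c).+1)
        / (qpoch t t b * (qpoch t t c * (1 - t ^+ c.+1)))
    & qbinom t (b + c.+1) b.+1 = qpoch t t (b + c) * (1 - t ^+ (b + c).+1)
        / (qpoch t t b * (1 - t ^+ b.+1) * qpoch t t c)].
Proof.
have tbc : t ^+ (b + c).+2 = t ^+ b.+1 * t ^+ c.+1 by rewrite -exprD addnS addSn.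
split.
- by rewrite -addSn qbinom_addE addSn addnS !qpochS -!exprS tbc.
- by rewrite qbinom_addE addnS !qpochS -!exprS.
- by rewrite -addSnnS qbinom_addE addSn !qpochS -!exprS.
Qed.

Hypothesis qpoch_neq0 : forall m, qpoch t t m != 0.

Lemma subr_expS_neq0 m : 1 - t ^+ m.+1 != 0.
Proof. by move: (qpoch_neq0 m.+1); rewrite qpochS -exprS mulf_eq0 negb_or => /andP[_]. Qed.

Lemma qbinom0 a : qbinom t a 0 = 1.
Proof. by rewrite -[a]add0n qbinom_addE qpoch0 mul1r divff. Qed.

Lemma qbinomn a : qbinom t a a = 1.
Proof. by have := qbinom_addE a 0; rewrite addn0 qpoch0 mulr1 divff. Qed.

Lemma qbinomS a b :
  qbinom t a.+1 b.+1 = qbinom t a b + t ^+ b.+1 * qbinom t a b.+1.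
Proof.
case: (ltngtP a b) => [lt_ab | lt_ba | ->].
- by rewrite !qbinom_small ?mulr0 ?addr0 // ltnW.
- have [c ->] : exists c, a = (b + c.+1)%N by exists (a - b.+1)%N; lia.
  have [-> -> ->] := qbinomSE b c.
  by field; rewrite !qpoch_neq0 !subr_expS_neq0.
- by rewrite !qbinomn qbinom_small // mulr0 addr0.
Qed.

Lemma qbinomS_dual a b :
  qbinom t a.+1 b.+1 = t ^+ (a - b) * qbinom t a b + qbinom t a b.+1.
Proof.
case: (ltngtP a b) => [lt_ab | lt_ba | ->].
- by rewrite !qbinom_small ?mulr0 ?addr0 // ltnW.
- have [c ->] : exists c, a = (b + c.+1)%N by exists (a - b.+1)%N; lia.
  have [-> -> ->] := qbinomSE b c.
  rewrite (_ : b + c.+1 - b = c.+1)%N; last by lia.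
  by field; rewrite !qpoch_neq0 !subr_expS_neq0.
- by rewrite !qbinomn qbinom_small // subnn mul1r addr0.
Qed.

Lemma qbinom_vandermonde a b e K : (b < K)%N ->
  \sum_(j < K) qbinom t a (j + e) * qbinom t b j * t ^+ (j * (j + e))
  = qbinom t (a + b) (b + e).
Proof.
(* Induction on b: the dual q-Pascal rule for [b.+1, j] splits the sum into the
   instances of the hypothesis at e and at e.+1, which recombine by qbinomS. *)
elim: b e K => [|b IH] e [|K] // lt_bK.
  rewrite big_ord_recl big1 => [|i _]; last by rewrite (@qbinom_small 0) ?mulr0 ?mul0r.
  by rewrite qbinom0 !mulr1 addr0 addn0.
rewrite big_ord_recl.
under eq_bigr => i _ do rewrite lift0 qbinomS_dual mulrDr mulrDl.
rewrite big_split /= [X in _ + X]addrC addrA.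
have -> : qbinom t a (0 + e) * qbinom t b.+1 0 * t ^+ (0 * (0 + e))
    + \sum_(i < K) qbinom t a (i.+1 + e) * qbinom t b i.+1 * t ^+ (i.+1 * (i.+1 + e))
    = qbinom t (a + b) (b + e).
  by rewrite -(IH e K.+1) 1?ltnS 1?ltnW // big_ord_recl !qbinom0.
have -> : \sum_(i < K) qbinom t a (i.+1 + e) * (t ^+ (b - i) * qbinom t b i)
      * t ^+ (i.+1 * (i.+1 + e))
    = t ^+ (b + e).+1
      * \sum_(i < K) qbinom t a (i + e.+1) * qbinom t b i * t ^+ (i * (i + e.+1)).
  rewrite mulr_sumr; apply: eq_bigr => i _.
  have [le_ib | lt_bi] := leqP i b; last by rewrite (qbinom_small lt_bi) !(mulr0, mul0r).
  have texp : t ^+ (b - i) * t ^+ (i.+1 * (i + e.+1))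
      = t ^+ (b + e).+1 * t ^+ (i * (i + e.+1)).
    by rewrite -!exprD; congr (_ ^+ _); nia.
  rewrite addSnnS; transitivity
    (qbinom t a (i + e.+1) * qbinom t b i * (t ^+ (b - i) * t ^+ (i.+1 * (i + e.+1)))).
    by ring.
  by rewrite texp; ring.
by rewrite (IH e.+1 K) // !addnS addSn qbinomS.
Qed.

Lemma qbinom_vandermonde1 l m : (1 <= l)%N ->
  \sum_(k < l) qbinom t l k.+1 * (t ^+ (k.+1 * k) * qbinom t m k)
  = qbinom t (l + m) (l - 1).
Proof.
move=> l_gt0; rewrite -(qbinom_sub (_ : l - 1 <= l + m)%N); last by lia.
rewrite (_ : l + m - (l - 1) = m + 1)%N; last by lia.
rewrite -(@qbinom_vandermonde l m 1 (l + m).+1) ?ltnS ?leq_addl //.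
rewrite (big_ord_widen (l + m).+1
  (fun k => qbinom t l k.+1 * (t ^+ (k.+1 * k) * qbinom t m k))) ?leqW ?leq_addr //.
rewrite big_mkcond; apply: eq_bigr => k _; rewrite addn1 mulnC mulrA mulrAC.
by case: ltnP => // le_lk; rewrite qbinom_small ?mul0r.
Qed.

End QBinomial.

Lemma geq_trans : transitive geq.
Proof. by move=> x y z /= le_xy le_yz; apply: leq_trans le_yz le_xy. Qed.

Lemma mem_leq_sumn (s : seq nat) x : x \in s -> (x <= sumn s)%N.
Proof. by elim: s => //= a s IH; rewrite in_cons => /orP[/eqP-> | /IH]; lia. Qed.

Lemma size_leq_sumn (s : seq nat) : all (fun y => 0 < y)%N s -> (size s <= sumn s)%N.
Proof. by elim: s => //= a s IH /andP[a_gt0 /IH]; lia. Qed.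

Lemma sumn_map_succ (s : seq nat) : sumn (map S s) = (sumn s + size s)%N.
Proof. by elim: s => //= a s ->; lia. Qed.

Lemma sorted_geq_filter_cat (s : seq nat) c : sorted geq s ->
  s = filter (fun y => c < y)%N s ++ filter (fun y => ~~ (c < y))%N s.
Proof.
elim: s => //= a s IH sorted_as.
have a_ub : all (geq a) s := order_path_min geq_trans sorted_as.
have [lt_ca | le_ac] /= := ltnP c a; first by rewrite -IH // (path_sorted sorted_as).
rewrite (@eq_in_filter _ _ pred0) ?filter_pred0 ?(@eq_in_filter _ _ predT) ?filter_predT //.
  by move=> y /(allP a_ub) /= le_ya; rewrite -leqNgt (leq_trans le_ya).
by move=> y /(allP a_ub) /= le_ya; rewrite ltnNge (leq_trans le_ya).
Qed.

Lemma nfun_widen (x : seq nat) K :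
  (size x <= K)%N -> nfun x = (\sum_(i < K) i * nth 0 x i)%N.
Proof.
move=> le_xK; rewrite /nfun (big_ord_widen K (fun i => i * nth 0 x i)%N le_xK).
rewrite big_mkcond /=; apply: eq_bigr => i _.
by case: ltnP => // le_i; rewrite nth_default ?muln0.
Qed.

Lemma double_sum_ord (k : nat) : (2 * \sum_(i < k) i = k * (k - 1))%N.
Proof.
elim: k => [|k IH]; first by rewrite big_ord0.
by rewrite big_ord_recr /= mulnDr IH; case: k {IH} => // k; nia.
Qed.

(* [add_column l mu] adds a first column of height l to the Young diagram of mu
   (which must have at most l rows); [drop_column] removes the first column. *)
Definition add_column (l : nat) (mu : seq nat) : seq nat :=
  map S mu ++ nseq (l - size mu) 1%N.

Definition drop_column (x : seq nat) : seq nat :=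
  map predn (filter (fun y => 1 < y)%N x).

Section Columns.

Variables (l : nat) (mu : seq nat).
Hypothesis size_mu : (size mu <= l)%N.

Lemma size_add_column : size (add_column l mu) = l.
Proof. by rewrite size_cat size_map size_nseq; lia. Qed.

Lemma sumn_add_column : sumn (add_column l mu) = (sumn mu + l)%N.
Proof. by rewrite sumn_cat sumn_map_succ sumn_nseq; lia. Qed.

Lemma nth_add_column i : (i < l)%N -> nth 0 (add_column l mu) i = (nth 0 mu i).+1.
Proof.
move=> lt_il; rewrite nth_cat size_map; case: ltnP => [lt_i | le_i].
  by rewrite (nth_map 0).
by rewrite nth_nseq (nth_default _ le_i) ifT //; lia.
Qed.

Lemma nfun_add_column :
  (2 * nfun (add_column l mu) = 2 * nfun mu + l * (l - 1))%N.
Proof.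
rewrite (nfun_widen size_mu) (nfun_widen (K := l)) ?size_add_column //.
rewrite -double_sum_ord -mulnDr -big_split /=; congr (2 * _)%N.
by apply: eq_bigr => i _; rewrite nth_add_column // mulnS addnC.
Qed.

Lemma add_column_partition n : (l <= n)%N -> is_partition (n - l) mu ->
  is_partition n (add_column l mu).
Proof.
move=> le_ln /and3P[sorted_mu _ /eqP sum_mu]; apply/and3P; split.
- rewrite (sorted_pairwise geq_trans) pairwise_cat; apply/and3P; split.
  + by apply/allrelP => a b /mapP[y _ ->] /nseqP[-> _].
  + rewrite -(sorted_pairwise geq_trans).
    by apply: homo_sorted sorted_mu => a b /=; rewrite ltnS.
  + by elim: (l - size mu)%N => //= k ->; rewrite all_nseq orbT.
- by rewrite all_cat all_nseq orbT andbT all_map; apply/allP.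
- by rewrite sumn_add_column sum_mu; apply/eqP; lia.
Qed.

Hypothesis mu_pos : all (fun y => 0 < y)%N mu.

Lemma mult1_add_column : mult 1 (add_column l mu) = (l - size mu)%N.
Proof.
rewrite /mult count_cat count_nseq /= mul1n count_map.
by rewrite (@eq_in_count _ _ pred0) ?count_pred0 // => y /(allP mu_pos); case: y.
Qed.

Lemma multS_add_column j : (0 < j)%N -> mult j.+1 (add_column l mu) = mult j mu.
Proof.
case: j => // j _; rewrite /mult count_cat count_nseq count_map /=.
by rewrite mul0n addn0; apply: eq_count.
Qed.

Lemma drop_add_column : drop_column (add_column l mu) = mu.
Proof.
rewrite /drop_column filter_cat (@eq_in_filter _ _ pred0 (nseq _ _)) => [|y /nseqP[-> //]].
rewrite filter_pred0 cats0.
by elim: mu mu_pos => //= y s IH /andP[y_gt0 s_pos]; rewrite ltnS y_gt0 /= IH.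
Qed.

End Columns.

Lemma add_drop_column n l x : is_partition n x -> size x = l ->
  add_column l (drop_column x) = x.
Proof.
case/and3P => sorted_x x_pos _ size_x.
have x_split := sorted_geq_filter_cat 1 sorted_x.
rewrite [RHS]x_split /add_column /drop_column size_map; congr (_ ++ _).
  by rewrite -map_comp map_id_in // => y; rewrite mem_filter => /andP[y_gt1 _] /=;
    rewrite prednK // ltnW.
have ones : all (pred1 1%N) (filter (fun y => ~~ (1 < y))%N x).
  apply/allP => y; rewrite mem_filter => /andP[le_y1 /(allP x_pos) /= y_gt0].
  by apply/eqP; lia.
by rewrite [in RHS](all_pred1P _ _ ones) -size_x [in size x]x_split size_cat addKn.
Qed.

Lemma drop_column_partition n l x : (l <= n)%N -> is_partition n x -> size x = l ->
  is_partition (n - l) (drop_column x) /\ (size (drop_column x) <= l)%N.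
Proof.
move=> le_ln part_x size_x.
have size_drop : (size (drop_column x) <= l)%N.
  by rewrite size_map -size_x size_filter count_size.
split => //.
have sum_x := congr1 sumn (add_drop_column part_x size_x).
case/and3P: part_x => sorted_x x_pos /eqP sum_x_n; apply/and3P; split.
- apply: homo_sorted (sorted_filter geq_trans _ sorted_x) => a b /=; lia.
- by rewrite all_map; apply/allP => y; rewrite mem_filter => /andP[y_gt1 _] /=; lia.
- by rewrite sumn_add_column // in sum_x; apply/eqP; lia.
Qed.

Section Weights.

Variables (F : fieldType) (t : F).

Definition part_weight (x : seq nat) : F :=
  t ^+ (2 * nfun x)
  * (qpoch t t (size x) / \prod_(1 <= j < (sumn x).+1) qpoch t t (mult j x)).

Lemma prod_qpoch_mult_add_column l mu :
  all (fun y => 0 < y)%N mu -> (size mu <= l)%N -> (1 <= l)%N ->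
  \prod_(1 <= j < (sumn (add_column l mu)).+1) qpoch t t (mult j (add_column l mu))
  = qpoch t t (l - size mu) * \prod_(1 <= j < (sumn mu).+1) qpoch t t (mult j mu).
Proof.
move=> mu_pos size_mu l_gt0.
rewrite sumn_add_column // big_ltn; last by lia.
rewrite mult1_add_column //; congr (_ * _).
have mult_big j : (sumn mu < j)%N -> mult j mu = 0%N.
  move=> lt_mu_j; apply/eqP; rewrite -leqn0 leqNgt -has_count.
  by apply/hasP => -[y /mem_leq_sumn le_y_mu /eqP y_j]; move: le_y_mu; rewrite y_j; lia.
rewrite big_add1 (@eq_big_nat _ _ _ 1 _ _ (fun j => qpoch t t (mult j mu))); last first.
  by move=> j /andP[j_gt0 _]; rewrite multS_add_column.
rewrite (@big_cat_nat _ _ _ (sumn mu).+1) //=; last by lia.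
rewrite [X in _ * X]big_nat_cond [X in _ * X]big1 ?mulr1 // => j /andP[/andP[lt_mu_j _] _].
by rewrite mult_big ?qpoch0.
Qed.

Hypothesis qpoch_neq0 : forall m, qpoch t t m != 0.

Lemma part_weight_add_column l mu :
  all (fun y => 0 < y)%N mu -> (size mu <= l)%N -> (1 <= l)%N ->
  part_weight (add_column l mu)
  = t ^+ (l * (l - 1)) * (qbinom t l (size mu) * part_weight mu).
Proof.
move=> mu_pos size_mu l_gt0.
rewrite /part_weight prod_qpoch_mult_add_column // nfun_add_column //.
rewrite size_add_column // exprD /qbinom size_mu.
have prod_neq0 : \prod_(1 <= j < (sumn mu).+1) qpoch t t (mult j mu) != 0.
  by rewrite prodf_seq_neq0; apply/allP => j _; apply/implyP.
by field; rewrite prod_neq0 !qpoch_neq0.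
Qed.

End Weights.

Definition partitions_len (n l : nat) : seq (seq nat) :=
  [seq x <- [seq map val s | s : l.-tuple 'I_n.+1 <- index_enum _] | is_partition n x].

Lemma mem_partitions_len n l x :
  (x \in partitions_len n l) = is_partition n x && (size x == l).
Proof.
rewrite mem_filter; apply: andb_id2l => part_x; apply/mapP/eqP => [[s _ ->] | size_x].
  by rewrite size_map size_tuple.
have size_inord : size (map (@inord n) x) == l by rewrite size_map size_x.
exists (Tuple size_inord); first by rewrite mem_index_enum.
rewrite /= -map_comp map_id_in // => y y_x /=; rewrite inordK // ltnS.
by case/and3P: part_x => _ _ /eqP <-; apply: mem_leq_sumn.
Qed.

Lemma partitions_len_uniq n l : uniq (partitions_len n l).
Proof.
rewrite filter_uniq // map_inj_uniq ?index_enum_uniq //.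
by move=> s1 s2 /(inj_map val_inj) /val_inj.
Qed.

Lemma perm_partitions_len_add_column n l : (l <= n)%N ->
  perm_eq (partitions_len n l)
    [seq add_column l mu | k <- index_iota 0 l.+1, mu <- partitions_len (n - l) k].
Proof.
move=> le_ln; apply: uniq_perm; first exact: partitions_len_uniq.
  apply: allpairs_uniq_dep => [|k _|]; [exact: iota_uniq | exact: partitions_len_uniq |].
  move=> _ _ /allpairsPdep[k1 [mu1 [_ part1 ->]]] /allpairsPdep[k2 [mu2 [_ part2 ->]]] /=.
  move: part1 part2; rewrite !mem_partitions_len.
  move=> /andP[/and3P[_ pos1 _] /eqP <-] /andP[/and3P[_ pos2 _] /eqP <-] eq_add.
  suff -> : mu1 = mu2 by [].
  by rewrite -(drop_add_column l pos1) eq_add drop_add_column.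
move=> x; rewrite mem_partitions_len; apply/idP/allpairsPdep => [/andP[part_x /eqP size_x] |].
  have [part_drop size_drop] := drop_column_partition le_ln part_x size_x.
  exists (size (drop_column x)), (drop_column x); split.
  - by rewrite mem_index_iota ltnS.
  - by rewrite mem_partitions_len part_drop eqxx.
  - by rewrite (add_drop_column part_x).
move=> [k [mu [k_l part_mu ->]]]; rewrite mem_index_iota in k_l.
move: part_mu; rewrite mem_partitions_len => /andP[part_mu /eqP size_mu].
by rewrite add_column_partition ?size_add_column ?size_mu //=; lia.
Qed.

Section WeightSum.

Variables (F : fieldType) (t : F).
Hypothesis qpoch_neq0 : forall m, qpoch t t m != 0.

Definition weight_sum (n l : nat) : F := \sum_(x <- partitions_len n l) part_weight t x.

Lemma weight_sum_rec n l : (1 <= l)%N -> (l <= n)%N ->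
  weight_sum n l
  = t ^+ (l * (l - 1)) * \sum_(k < l.+1) qbinom t l k * weight_sum (n - l) k.
Proof.
move=> l_gt0 le_ln; rewrite /weight_sum (perm_big _ (perm_partitions_len_add_column le_ln)).
rewrite big_allpairs_dep big_mkord mulr_sumr; apply: eq_bigr => k _.
rewrite !mulr_sumr; apply: eq_big_seq => mu.
rewrite mem_partitions_len => /andP[/and3P[_ mu_pos _] /eqP size_mu].
have size_mu_l : (size mu <= l)%N by rewrite size_mu -ltnS.
by rewrite part_weight_add_column // size_mu.
Qed.

Lemma weight_sum_eq0 n l :
  (forall x, is_partition n x -> size x = l -> False) -> weight_sum n l = 0.
Proof.
move=> no_part; rewrite /weight_sum big_seq big1 // => x.
by rewrite mem_partitions_len => /andP[part_x /eqP /(no_part x part_x)].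
Qed.

Lemma weight_sum_small n l : (n < l)%N -> weight_sum n l = 0.
Proof.
move=> lt_nl; apply: weight_sum_eq0 => x /and3P[_ x_pos /eqP sum_x] size_x.
by have := size_leq_sumn x_pos; rewrite sum_x size_x leqNgt lt_nl.
Qed.

Lemma weight_sum_n0 n : (0 < n)%N -> weight_sum n 0 = 0.
Proof.
move=> n_gt0; apply: weight_sum_eq0 => x /and3P[_ _ /eqP sum_x] /size0nil x_nil.
by move: sum_x n_gt0; rewrite x_nil => <-.
Qed.

Lemma weight_sum00 : weight_sum 0 0 = 1.
Proof.
rewrite /weight_sum (perm_big [:: [::]]).
  by rewrite big_seq1 /part_weight /nfun big_ord0 qpoch0 big_geq ?divr1 ?mulr1.
apply: uniq_perm (partitions_len_uniq 0 0) _ _ => // x.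
by rewrite mem_partitions_len mem_seq1 size_eq0 andbC; case: eqP => [->|].
Qed.

Lemma weight_sum_closed n l : (1 <= n)%N -> (1 <= l)%N ->
  weight_sum n l = t ^+ (l * (l - 1)) * qbinom t (n - 1) (l - 1).
Proof.
elim/ltn_ind: n l => n IH l n_gt0 l_gt0.
have [lt_nl | le_ln] := ltnP n l.
  by rewrite weight_sum_small // qbinom_small ?mulr0 //; lia.
rewrite weight_sum_rec //; congr (_ * _).
have [lt_ln | eq_ln] : (l < n)%N \/ l = n by lia.
  rewrite big_ord_recl weight_sum_n0 ?subn_gt0 // mulr0 add0r.
  have IH_k k : weight_sum (n - l) k.+1 = t ^+ (k.+1 * k) * qbinom t (n - l - 1) k.
    by rewrite IH ?subSS ?subn0 //; lia.
  under eq_bigr => k _ do rewrite lift0 IH_k.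
  by rewrite qbinom_vandermonde1 //; congr qbinom; lia.
rewrite eq_ln subnn big_ord_recl /= weight_sum00 (qbinom0 qpoch_neq0) mulr1.
rewrite big1 ?addr0 ?(qbinomn qpoch_neq0) //.
by move=> k _; rewrite weight_sum_small ?mulr0.
Qed.

End WeightSum.

Lemma qpoch_tq_neq0 m : qpoch tq tq m != 0.
Proof.
rewrite prodf_seq_neq0; apply/allP => i _; apply/implyP => _.
rewrite /tq -tofracXn -tofracM -tofrac1 -tofracB tofrac_eq0 -exprS.
apply/eqP => /(congr1 (fun p : {poly int} => p`_0)).
by rewrite coefB coef1 coefXn coef0 subr0.
Qed.

Unset Implicit Arguments.

Theorem mainTheorem9 (n l : nat) (hn : (1 <= n)%N) (hl : (1 <= l)%N) :
  \sum_(s : l.-tuple 'I_n.+1 | is_partition n (map val s))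
     tq ^+ (2 * nfun (map val s))
       * (qpoch tq tq l
          / \prod_(1 <= j < n.+1) qpoch tq tq (mult j (map val s)))
  = tq ^+ (l * (l - 1)) * qbinom tq (n - 1) (l - 1).
Proof.
rewrite -(weight_sum_closed qpoch_tq_neq0 hn hl) /weight_sum big_filter big_map.
apply: eq_bigr => s /and3P[_ _ /eqP sum_s].
by rewrite /part_weight sum_s size_map size_tuple.
Qed.
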